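(* Let $C$ and $C'$ be filtered chain complexes with strictly filtration-decreasing differentials, and let $a\in\mathbb{R}$, $\delta>0$. Assume $C^{[a+\delta,a+3\delta)}=C^{[a,a+4\delta)}$ are both two-dimensional, while $C'^{[a,a+4\delta)}=0$. Assume there are chain maps $\phi\colon C\to C'$ and $\psi\colon C'\to C$, both of degree $\epsilon>0$, such that $\psi\phi$ and $\phi\psi$ are homotopic to automorphisms of filtered chain complexes via chain homotopies of degree $\epsilon$. If $\delta>\epsilon>0$, then $C^{[a+\delta,a+3\delta)}$ is a complex generated by two elements $x,y$ with $\partial x=ky$ for some unit $k$.
   Context: For a filtered complex $C$ with action filtration $\ell$, $C^{<a}=\ell^{-1}(-\infty,a)$ and $C^{[a,b)}=C^{<b}/C^{<a}$ is the quotient complex in the action window $[a,b)$. A map has degree $\epsilon$ if it raises action by at most $\epsilon$. An automorphism of filtered chain complexes is a degree-zero chain map with degree-zero inverse. *)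

From HB Require Import structures.
From mathcomp Require Import all_boot all_order all_algebra.
From mathcomp Require Import reals constructive_ereal.
Set Implicit Arguments. Unset Strict Implicit. Unset Printing Implicit Defensive.
Import Order.TTheory GRing.Theory Num.Theory.
Local Open Scope ring_scope.

Section FilteredComplexes.
Variables (R : realType) (K : fieldType) (V : lmodType K).

Definition filtered_complex (d : V -> V) (ell : V -> \bar R) : Prop :=
  [/\ forall x, d (d x) = 0,
      forall x, ell x = -oo%E <-> x = 0,
      forall x, ell x != +oo%E,
      forall x y, (ell (x + y)%R <= Order.max (ell x) (ell y))%E
    & forall (c : K) x, c != 0 -> ell (c *: x) = ell x].

Definition strictly_decreasing (d : V -> V) (ell : V -> \bar R) : Prop :=
  forall x, x != 0 -> (ell (d x) < ell x)%E.

(* The family e : 'I_n -> V (of elements of C^{<b}) projects to a basis of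
   the quotient C^{[a,b)} = C^{<b} / C^{<a}, where C^{<t} = ell^{-1}[-oo,t). *)
Definition window_basis (ell : V -> \bar R) (a b : R) (n : nat)
    (e : 'I_n -> V) : Prop :=
  [/\ forall i, (ell (e i) < b%:E)%E,
      forall c : 'I_n -> K,
        (ell (\sum_(i < n) c i *: e i)%R < a%:E)%E -> forall i, c i = 0
    & forall x, (ell x < b%:E)%E ->
        exists c : 'I_n -> K, (ell (x - \sum_(i < n) c i *: e i)%R < a%:E)%E].

Definition window_dim (ell : V -> \bar R) (a b : R) (n : nat) : Prop :=
  exists e : 'I_n -> V, window_basis ell a b e.

End FilteredComplexes.

Section Maps.
Variables (R : realType) (K : fieldType) (V W : lmodType K).

Definition has_degree (ellV : V -> \bar R) (ellW : W -> \bar R)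
    (eps : R) (f : V -> W) : Prop :=
  forall x, (ellW (f x) <= ellV x + eps%:E)%E.

Definition chain_map (dV : V -> V) (dW : W -> W) (f : V -> W) : Prop :=
  forall x, f (dV x) = dW (f x).

End Maps.

Definition filtered_automorphism (R : realType) (K : fieldType) (V : lmodType K)
    (d : V -> V) (ell : V -> \bar R) (A : {linear V -> V}) : Prop :=
  [/\ chain_map d d A, has_degree ell ell 0 A &
      exists B : {linear V -> V},
        [/\ has_degree ell ell 0 B, chain_map d d B,
            forall x, A (B x) = x & forall x, B (A x) = x]].

Definition homotopic_to_automorphism_deg (R : realType) (K : fieldType)
    (V : lmodType K) (d : V -> V) (ell : V -> \bar R) (eps : R) (g : V -> V) : Prop :=
  exists (A H : {linear V -> V}),
    [/\ filtered_automorphism d ell A, has_degree ell ell eps H &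
        forall x, g x - A x = d (H x) + H (d x)].

(* The windows C^[a+delta, a+3delta) and C^[a, a+4delta) are both
   two-dimensional and nested, so they coincide: C^{<a+4delta} = C^{<a+3delta}
   and C^{<a+delta} = C^{<a}.  Let A be the automorphism homotopic to
   psi o phi via H, with inverse B.  If d mapped C^{<a+3delta} into
   C^{<a+delta}, every x in C^{<a+3delta} would satisfy
   x = B (psi (phi x) - d (H x) - H (d x)), where phi x falls into the zero
   window of C' and each of the three terms lies in C^{<a+delta}; so the whole
   window would vanish.  Hence some basis element u has d u outside
   C^{<a+delta}.  As d (d u) = 0, d u is not congruent to a multiple of u
   modulo C^{<a+delta}, so (u, d u) is a basis of the window, with k = 1. *)

From mathcomp Require Import all_boot all_order all_algebra.
From mathcomp Require Import reals constructive_ereal lra.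
Import Order.TTheory GRing.Theory Num.Theory.
Set Implicit Arguments. Unset Strict Implicit. Unset Printing Implicit Defensive.
Local Open Scope ring_scope.

Section SubmodClosed.
Variables (K : fieldType) (V : lmodType K) (S : {pred V}).
Hypothesis sS : submod_closed S.

Lemma submod_closed_memD : {in S &, forall u v, u + v \in S}.
Proof. by case: sS => _ lin u v Su Sv; rewrite -[u]scale1r lin. Qed.

Lemma submod_closed_memZ c : {in S, forall v, c *: v \in S}.
Proof. by case: sS => S0 lin v Sv; rewrite -[_ *: v]addr0 lin. Qed.

Lemma submod_closed_memB : {in S &, forall u v, u - v \in S}.
Proof.
by move=> u v Su Sv; rewrite submod_closed_memD // -scaleN1r submod_closed_memZ.
Qed.

End SubmodClosed.

Section Quotient2.
Variables (K : fieldType) (V : lmodType K).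
Implicit Types (S T P : {pred V}) (u w x y z : V).

(* [indep2_mod S u w] and [span2_mod S P u w] say that the classes of [u] and
   [w] are independent in, resp. span, the quotient [P / S]; the quotient
   itself is never formed. *)
Definition indep2_mod S u w :=
  forall c0 c1 : K, c0 *: u + c1 *: w \in S -> c0 = 0 /\ c1 = 0.

Definition span2_mod S P u w :=
  {in P, forall v, exists c0 c1 : K, v - (c0 *: u + c1 *: w) \in S}.

Definition basis2_mod S P u w := indep2_mod S u w /\ span2_mod S P u w.

Lemma indep2_modC S u w : indep2_mod S u w -> indep2_mod S w u.
Proof. by move=> uw c0 c1; rewrite addrC => /uw[-> ->]. Qed.

Lemma span2_modC S P u w : span2_mod S P u w -> span2_mod S P w u.
Proof. by move=> uw v /uw[c0 [c1 h]]; exists c1, c0; rewrite (addrC (c1 *: w)). Qed.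

Lemma basis2_modC S P u w : basis2_mod S P u w -> basis2_mod S P w u.
Proof. by case=> uw span; split; [apply: indep2_modC | apply: span2_modC]. Qed.

Lemma indep2_mod_notin S u w : indep2_mod S u w -> u \notin S.
Proof.
move=> uw; apply/negP => Su.
have [/eqP] : (1 : K) = 0 /\ (0 : K) = 0 by apply: uw; rewrite scale1r scale0r addr0.
by rewrite oner_eq0.
Qed.

Lemma indep2_modS S T u w : {subset S <= T} -> indep2_mod T u w -> indep2_mod S u w.
Proof. by move=> ST uw c0 c1 /ST /uw. Qed.

Variable S : {pred V}.
Hypothesis sS : submod_closed S.

Lemma indep2_mod_exchange u w z (a b : K) :
  indep2_mod S u w -> z - (a *: u + b *: w) \in S -> b != 0 -> indep2_mod S u z.
Proof.
move=> uw Sz b0 c0 c1 Suz.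
have : (c0 + c1 * a) *: u + (c1 * b) *: w \in S.
  have -> : (c0 + c1 * a) *: u + (c1 * b) *: w
          = c0 *: u + c1 *: z - c1 *: (z - (a *: u + b *: w)).
    by rewrite scalerBr opprB [_ - c1 *: z]addrC addrA addrK scalerDr !scalerA scalerDl addrA.
  by rewrite submod_closed_memB // submod_closed_memZ.
case/uw=> c0a /eqP; rewrite mulf_eq0 (negbTE b0) orbF => /eqP c10.
by move: c0a; rewrite c10 mul0r addr0.
Qed.

Lemma span2_mod_exchange P u w z (a b : K) :
  span2_mod S P u w -> z - (a *: u + b *: w) \in S -> b != 0 -> span2_mod S P u z.
Proof.
move=> uw Sz b0 v /uw[c0 [c1 Sv]]; exists (c0 - c1 / b * a), (c1 / b).
have -> : v - ((c0 - c1 / b * a) *: u + c1 / b *: z)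
        = v - (c0 *: u + c1 *: w) - c1 / b *: (z - (a *: u + b *: w)).
  rewrite scalerBr scalerDr !scalerA divfK // scalerBl.
  rewrite [in RHS]opprB -[in RHS]addrA; congr (_ + _).
  rewrite [in RHS]addrA opprD; congr (_ - _).
  by rewrite opprB opprD addrACA addNr addr0 addrC.
by rewrite submod_closed_memB // submod_closed_memZ.
Qed.

Lemma span2_mod_insert P x y u :
  span2_mod S P x y -> u \in P -> u \notin S -> exists z, span2_mod S P u z.
Proof.
move=> xy Pu Su; have [a [b Sab]] := xy u Pu.
have [b0|nb0] := eqVneq b 0; last first.
  by exists x; apply: span2_modC; apply: span2_mod_exchange xy Sab nb0.
have [a0|na0] := eqVneq a 0.
  by move: Sab; rewrite a0 b0 !scale0r addr0 subr0 (negbTE Su).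
rewrite (addrC (a *: x)) in Sab.
by exists y; apply: span2_modC; apply: span2_mod_exchange (span2_modC xy) Sab na0.
Qed.

Lemma indep2_span2_mod P x y u w :
  span2_mod S P x y -> indep2_mod S u w -> u \in P -> w \in P -> span2_mod S P u w.
Proof.
move=> xy uw Pu Pw; have [z uz] := span2_mod_insert xy Pu (indep2_mod_notin uw).
have [a [b Sw]] := uz w Pw.
have [b0|nb0] := eqVneq b 0; last exact: span2_mod_exchange uz Sw nb0.
have [_ /eqP] : - a = 0 /\ (1 : K) = 0.
  by apply: uw; move: Sw; rewrite b0 scale0r addr0 scaleNr scale1r addrC.
by rewrite oner_eq0.
Qed.

Lemma span2_mod_gap T P u w :
  submod_closed T -> {subset S <= T} -> indep2_mod T u w -> span2_mod S P u w ->
  {in P, forall v, v \in T -> v \in S}.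
Proof.
move=> sT ST uw span v /span[c0 [c1 Sv]] Tv.
have [c00 c10] : c0 = 0 /\ c1 = 0.
  apply: uw; have -> : c0 *: u + c1 *: w = v - (v - (c0 *: u + c1 *: w)).
    by rewrite opprB addrCA subrr addr0.
  by apply: submod_closed_memB => //; apply: ST.
by move: Sv; rewrite c00 c10 !scale0r addr0 subr0.
Qed.

Lemma span2_mod_image (W : lmodType K) (T : {pred W}) (f : {linear V -> W}) P u w :
  submod_closed T -> span2_mod S P u w -> {in S, forall v, f v \in T} ->
  f u \in T -> f w \in T -> {in P, forall v, f v \in T}.
Proof.
move=> sT span fS fu fw v /span[c0 [c1 Sv]].
rewrite -(subrK (c0 *: u + c1 *: w) v) linearD submod_closed_memD //; first exact: fS.
by rewrite linearD !linearZ submod_closed_memD ?submod_closed_memZ.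
Qed.

Lemma span2_mod_image_notin (W : lmodType K) (T : {pred W}) (f : {linear V -> W})
    P u w :
  submod_closed T -> span2_mod S P u w -> {in S, forall v, f v \in T} ->
  ~ {in P, forall v, f v \in T} -> f u \notin T \/ f w \notin T.
Proof.
move=> sT span fS fP; have [fu|] := boolP (f u \in T); last by left.
have [fw|] := boolP (f w \in T); last by right.
by case: fP; apply: span2_mod_image span fS fu fw.
Qed.

Lemma basis2_mod_d P u w (d : {linear V -> V}) :
  (forall v, d (d v) = 0) -> {in S, forall v, d v \in S} ->
  basis2_mod S P u w -> d u \in P -> d u \notin S -> basis2_mod S P u (d u).
Proof.
move=> dd dS [uw span] Pdu Sdu; have [a [b Sb]] := span _ Pdu.
suff nb0 : b != 0.
  by split; [exact: indep2_mod_exchange uw Sb nb0 | exact: span2_mod_exchange span Sb nb0].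
apply: contraNneq Sdu => b0; move: Sb; rewrite b0 scale0r addr0 => Sa.
have [a0|na0] := eqVneq a 0; first by move: Sa; rewrite a0 scale0r subr0.
have := dS _ Sa; rewrite linearB linearZ /= dd sub0r => Sad.
have := submod_closed_memZ sS (- a^-1) Sad.
by rewrite scalerN scaleNr opprK scalerA mulVf // scale1r.
Qed.

End Quotient2.

Lemma big_ord2 (T : Type) (idx : T) (op : Monoid.law idx) (F : 'I_2 -> T) :
  \big[op/idx]_(i < 2) F i = op (F ord0) (F ord_max).
Proof. by rewrite big_ord_recr big_ord1 /=; congr (op (F _) (F _)); apply: val_inj. Qed.

Lemma ord2_cases (i : 'I_2) : i = ord0 \/ i = ord_max.
Proof. by case: i => -[|[|//]] ?; [left | right]; apply: val_inj. Qed.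

Section Sublevel.
Variables (R : realType) (K : fieldType) (V : lmodType K).

Definition sublevel (ell : V -> \bar R) (t : R) : {pred V} :=
  fun v => (ell v < t%:E)%E.

Lemma mem_sublevel (ell : V -> \bar R) (t : R) v :
  (v \in sublevel ell t) = (ell v < t%:E)%E.
Proof. by []. Qed.

Lemma sublevel_le (ell : V -> \bar R) (s t : R) :
  s <= t -> {subset sublevel ell s <= sublevel ell t}.
Proof. by move=> st v /lt_le_trans; apply; rewrite lee_fin. Qed.

Lemma window_basis2P (ell : V -> \bar R) (a b : R) (e : 'I_2 -> V) :
  window_basis ell a b e <->
  [/\ e ord0 \in sublevel ell b, e ord_max \in sublevel ell b &
      basis2_mod (sublevel ell a) (sublevel ell b) (e ord0) (e ord_max)].
Proof.
have sum2 (c : 'I_2 -> K) :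
    \sum_(i < 2) c i *: e i = c ord0 *: e ord0 + c ord_max *: e ord_max.
  exact: big_ord2.
split=> [[eb indep span] | [e0b e1b [indep span]]].
  split; [exact: eb | exact: eb | split=> [c0 c1 Sc | v /span[c Sv]]].
    have := indep (fun i => if i == ord0 then c0 else c1).
    by rewrite sum2 => /(_ Sc) c0'; split; [exact: c0' ord0 | exact: c0' ord_max].
  by exists (c ord0), (c ord_max); rewrite -sum2.
split=> [i | c | v /span[c0 [c1 Sv]]].
- by case: (ord2_cases i) => ->.
- by rewrite sum2 => /indep[c0 c1] i; case: (ord2_cases i) => ->.
- by exists (fun i => if i == ord0 then c0 else c1); rewrite sum2.
Qed.

Lemma window_dim0_sublevel (ell : V -> \bar R) (a b : R) :
  window_dim ell a b 0 -> {subset sublevel ell b <= sublevel ell a}.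
Proof. by case=> e [_ _ span] v /span[c]; rewrite big_ord0 subr0. Qed.

Variables (d : {linear V -> V}) (ell : V -> \bar R).
Hypothesis fc : filtered_complex d ell.

Lemma filtration0 : ell 0 = -oo%E.
Proof. by case: fc => _ ell_eqNy _ _ _; apply/ell_eqNy. Qed.

Lemma sublevel_submod_closed (t : R) : submod_closed (sublevel ell t).
Proof.
case: fc => _ _ _ ellD ellZ; split=> [|c u v tu tv].
  by rewrite mem_sublevel filtration0 ltNyr.
rewrite !mem_sublevel in tu tv *.
apply: le_lt_trans (ellD _ _) _; rewrite gt_max tv andbT.
have [->|c0] := eqVneq c 0; last by rewrite ellZ.
by rewrite scale0r filtration0 ltNyr.
Qed.

Lemma sublevel_d (t : R) :
  strictly_decreasing d ell -> {in sublevel ell t, forall v, d v \in sublevel ell t}.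
Proof.
move=> sd v tv; have [->|v0] := eqVneq v 0.
  by rewrite linear0 mem_sublevel filtration0 ltNyr.
exact: lt_trans (sd _ v0) tv.
Qed.

Lemma nested_window2_gaps (r s t u : R) (e : 'I_2 -> V) :
  r <= s -> s <= t -> t <= u -> window_basis ell s t e -> window_dim ell r u 2 ->
  {subset sublevel ell u <= sublevel ell t} /\ {subset sublevel ell s <= sublevel ell r}.
Proof.
move=> rs st tu /window_basis2P[e0t e1t [e_indep _]] [f /window_basis2P[_ _ [_ f_span]]].
have e_span := indep2_span2_mod (sublevel_submod_closed r) f_span
  (indep2_modS (sublevel_le rs) e_indep) (sublevel_le tu e0t) (sublevel_le tu e1t).
split.
  apply: (span2_mod_image (f := idfun)) e_span _ e0t e1t.
  - exact: sublevel_submod_closed.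
  - by move=> v; apply: sublevel_le; apply: le_trans st.
move=> v sv.
apply: (span2_mod_gap (sublevel_submod_closed s) (sublevel_le rs) e_indep e_span _ sv).
by apply: sublevel_le sv; apply: le_trans tu.
Qed.

End Sublevel.

Lemma has_degree_sublevel (R : realType) (K : fieldType) (V W : lmodType K)
    (ellV : V -> \bar R) (ellW : W -> \bar R) (eps s t : R) (f : V -> W) :
  has_degree ellV ellW eps f -> t + eps <= s ->
  {in sublevel ellV t, forall v, f v \in sublevel ellW s}.
Proof.
move=> deg_f ts v; rewrite !mem_sublevel; move: (deg_f v).
case: (ellV v) => [r | | ] fv tv //.
  apply: le_lt_trans fv _; rewrite -EFinD lte_fin.
  by apply: lt_le_trans ts; rewrite ltrD2r -lte_fin.
by move: fv; rewrite leeNy_eq => /eqP ->; apply: ltNyr.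
Qed.

Lemma window_collapse (R : realType) (K : fieldType) (V W : lmodType K)
    (d : {linear V -> V}) (ellV : V -> \bar R) (ellW : W -> \bar R)
    (phi : V -> W) (psi : W -> V) (eps r s t u : R) :
  filtered_complex d ellV ->
  has_degree ellV ellW eps phi -> has_degree ellW ellV eps psi ->
  homotopic_to_automorphism_deg d ellV eps (psi \o phi) ->
  r + eps <= s -> t + eps <= u ->
  {subset sublevel ellW u <= sublevel ellW r} ->
  {subset sublevel ellV u <= sublevel ellV t} ->
  {subset sublevel ellV s <= sublevel ellV r} ->
  {in sublevel ellV t, forall v, d v \in sublevel ellV s} ->
  {subset sublevel ellV t <= sublevel ellV s}.
Proof.
move=> fc deg_phi deg_psi [A [H [[_ _ [B [deg_B _ _ BA]]] deg_H hom]]].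
move=> rs tu W_ur V_ut V_sr d_ts x tx.
have Ax : A x = psi (phi x) - (d (H x) + H (d x)).
  by rewrite -hom opprB addrC subrK.
have s0 : s + 0 <= s by rewrite addr0.
rewrite -(BA x); apply: (has_degree_sublevel deg_B s0).
have s_sub := sublevel_submod_closed fc s.
rewrite Ax submod_closed_memB ?submod_closed_memD //.
- by apply: (has_degree_sublevel deg_psi rs); apply/W_ur/(has_degree_sublevel deg_phi tu).
- by apply/d_ts/V_ut/(has_degree_sublevel deg_H tu).
- by apply: (has_degree_sublevel deg_H rs); apply/V_sr/d_ts.
Qed.

Theorem lemma2p3 (R : realType) (K : fieldType) (V W : lmodType K)
    (dV : {linear V -> V}) (ellV : V -> \bar R)
    (dW : {linear W -> W}) (ellW : W -> \bar R)
    (a delta eps : R)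
    (phi : {linear V -> W}) (psi : {linear W -> V}) :
  filtered_complex dV ellV -> strictly_decreasing dV ellV ->
  filtered_complex dW ellW -> strictly_decreasing dW ellW ->
  0 < delta ->
  window_dim ellV (a + delta) (a + 3%:R * delta) 2 ->
  window_dim ellV a (a + 4%:R * delta) 2 ->
  window_dim ellW a (a + 4%:R * delta) 0 ->
  0 < eps -> eps < delta ->
  chain_map dV dW phi -> has_degree ellV ellW eps phi ->
  chain_map dW dV psi -> has_degree ellW ellV eps psi ->
  homotopic_to_automorphism_deg dV ellV eps (psi \o phi) ->
  homotopic_to_automorphism_deg dW ellW eps (phi \o psi) ->
  exists (e : 'I_2 -> V) (k : K),
    [/\ k \is a GRing.unit,
        window_basis ellV (a + delta) (a + 3%:R * delta) e &
        (ellV (dV (e ord0) - k *: e ord_max)%R < (a + delta)%:E)%E].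
Proof.
move=> fcV sdV _ _ delta_gt0 [e eB] V_dim W_null _ eps_lt _ deg_phi _ deg_psi hom _.
set t1 := a + delta; set t3 := a + 3%:R * delta; set t4 := a + 4%:R * delta.
have level_closed t := sublevel_submod_closed fcV t.
have d_level t := sublevel_d (t := t) fcV sdV.
have [gap_hi gap_lo] : {subset sublevel ellV t4 <= sublevel ellV t3} /\
    {subset sublevel ellV t1 <= sublevel ellV a}.
  by apply: (nested_window2_gaps fcV) eB V_dim; rewrite /t1 /t3 /t4; lra.
have /window_basis2P[e0t3 e1t3 e_basis] := eB.
have d_big : ~ {in sublevel ellV t3, forall v, dV v \in sublevel ellV t1}.
  move=> d_small; have /negP := indep2_mod_notin e_basis.1; apply.
  apply: (window_collapse fcV deg_phi deg_psi hom _ _ (window_dim0_sublevel W_null)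
    gap_hi gap_lo d_small e0t3); rewrite /t1 /t3 /t4; lra.
suff [u [w [ut3 uw_basis du_big]]] : exists u w, [/\ u \in sublevel ellV t3,
    basis2_mod (sublevel ellV t1) (sublevel ellV t3) u w & dV u \notin sublevel ellV t1].
  have [dd _ _ _ _] := fcV.
  have udu_basis :=
    basis2_mod_d (level_closed t1) dd (d_level t1) uw_basis (d_level t3 u ut3) du_big.
  exists (fun i : 'I_2 => if i == ord0 then u else dV u), 1; split.
  - exact: unitr1.
  - by apply/window_basis2P; split=> //; apply: d_level.
  - by rewrite /= scale1r subrr (filtration0 fcV) ltNyr.
have [] := span2_mod_image_notin (level_closed t1) e_basis.2 (d_level t1) d_big => du_big.
  by exists (e ord0), (e ord_max).
by exists (e ord_max), (e ord0); split=> //; apply: basis2_modC.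
Qed.
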